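(* Let $(S,\mathscr{S})$ be a measurable space, $n\le N$, $g:S^n\to\mathbb{R}$ a function and $f:S^N\to\mathbb{R}$ a symmetric $\mathscr{S}^N$-measurable function. Then: (i) $\|U^N_ng\|\le\|g\|$; (ii) $U^{n_3}_{n_1}=U^{n_3}_{n_2}\circ U^{n_2}_{n_1}$ whenever $n_1\le n_2\le n_3$; (iii) $\|U^N_ng\|$ is nonincreasing in $N$ ($N\ge n$); (iv) $f$ is measurable with respect to the $\sigma$-algebra generated by the functions $U^N_n h$, where $h$ ranges over all measurable functions $S^n\to\mathbb{R}$.
   Context: $\|\cdot\|$ is the sup norm. A function on $S^k$ is symmetric if it is invariant under all permutations of its arguments. With $\mathfrak S[n,N]$ the set of injections $\{1,\ldots,n\}\to\{1,\ldots,N\}$ and $(N)_n=N(N-1)\cdots(N-n+1)$, $U^N_ng(x_1,\ldots,x_N)=\frac1{(N)_n}\sum_{\sigma\in\mathfrak S[n,N]}g(x_{\sigma(1)},\ldots,x_{\sigma(n)})$. *)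

From HB Require Import structures.
From mathcomp Require Import all_boot all_order all_algebra all_fingroup.
From mathcomp Require Import all_classical all_reals all_analysis.
Set Implicit Arguments. Unset Strict Implicit. Unset Printing Implicit Defensive.
Import Order.TTheory GRing.Theory Num.Theory.
Local Open Scope classical_set_scope.
Local Open Scope ring_scope.

(* S^n is modelled as n.-tuple S, which MathComp-Analysis equips with the
   product sigma-algebra (generated by the coordinate projections tnth). *)

Definition supnorm (R : realType) (T : Type) (g : T -> R) : \bar R :=
  ereal_sup [set (`|g x|)%:E | x in [set: T]].

Definition subtuple (S : Type) (n N : nat) (s : 'I_n -> 'I_N)
  (x : N.-tuple S) : n.-tuple S := [tuple tnth x (s i) | i < n].

(* U^N_n g (x_1..x_N) = 1/(N)_n * sum over injections s : [n] -> [N] of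
   g(x_{s 1},...,x_{s n});  (N)_n = N ^_ n is the falling factorial. *)
Definition Ustat (R : realType) (S : Type) (n N : nat)
  (g : n.-tuple S -> R) (x : N.-tuple S) : R :=
  (N ^_ n)%:R^-1 *
  \sum_(s : {ffun 'I_n -> 'I_N} | injectiveb s) g (subtuple s x).
Arguments Ustat {R S n} N g x.

Definition symmetric_fun (R : realType) (S : Type) (N : nat)
  (f : N.-tuple S -> R) : Prop :=
  forall (p : {perm 'I_N}) (x : N.-tuple S), f (subtuple p x) = f x.

Definition sigma_U (R : realType) (d : measure_display) (S : measurableType d)
  (n N : nat) : set (set (N.-tuple S)) :=
  <<s \bigcup_(h in [set h : n.-tuple S -> R | measurable_fun [set: n.-tuple S] h])
        preimage_set_system [set: N.-tuple S] (Ustat N h) measurable >>.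
Arguments sigma_U R {d} S n N.

From HB Require Import structures.
From mathcomp Require Import all_boot all_order all_algebra all_fingroup.
From mathcomp Require Import all_classical all_reals all_analysis.
From mathcomp Require Import primitive_action alt ring.
Import Order.TTheory GRing.Theory Num.Theory.
Set Implicit Arguments. Unset Strict Implicit. Unset Printing Implicit Defensive.
Local Open Scope classical_set_scope.
Local Open Scope ring_scope.

(* (ii): for injective t : [n1] -> [n2], the map s |-> s o t from injections
   [n2] -> [n3] to injections [n1] -> [n3] has fibers of equal size, since the
   symmetric group on [n3] acts transitively on injections; (i) holds because
   U^N_n g is an average of values of g, and (iii) follows from (i) and (ii).
   (iv): for measurable A in S^N let c_A(x) count the permutations p with
   x o p in A. The coordinate sums x |-> sum_i phi(x_i) are multiples of
   U^N_1 phi = U^N_n (U^n_1 phi), hence sigma_U-measurable; they count the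
   coordinates falling in each atom of a finite measurable partition of S, and
   c_A of a rectangle is a function of these counts. A Dynkin argument extends
   measurability of c_A to all measurable A, and c_A = N! 1_A when A is
   invariant under permutations, e.g. A = f^-1(B) for symmetric f. *)

Lemma perm_extend_injective n N (u v : 'I_n -> 'I_N) :
  injective u -> injective v -> exists s : {perm 'I_N}, forall i, s (u i) = v i.
Proof.
move=> inj_u inj_v.
have leN : (n <= #|'I_N|)%N by rewrite -[n]card_ord; apply: leq_card inj_u.
have Sym_Ntrans := ntransitive_weak leN (@Sym_trans 'I_N).
have dtupleP (w : 'I_n -> 'I_N) : injective w ->
    [tuple w i | i < n] \in n.-dtuple([set: 'I_N]%SET).
  move=> inj_w; apply/dtuple_onP; split=> [i j|i]; last by rewrite inE.
  by rewrite !tnth_mktuple => /inj_w.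
have [s _ us_v] := atransP2 Sym_Ntrans (dtupleP _ inj_u) (dtupleP _ inj_v).
exists s => i; have := congr1 (fun w => tnth w i) us_v; rewrite tnth_mktuple => ->.
by rewrite /= /n_act tnth_map tnth_mktuple /= apermE.
Qed.

Lemma card_injectiveb_ffun n N :
  #|[pred s : {ffun 'I_n -> 'I_N} | injectiveb s]| = (N ^_ n)%N.
Proof.
have := card_inj_ffuns 'I_n 'I_N; rewrite !card_ord => <-.
by apply: eq_card => s; rewrite !inE.
Qed.

Lemma sum_injectiveb_cst (R : pzRingType) n N (c : R) :
  \sum_(s : {ffun 'I_n -> 'I_N} | injectiveb s) c = c * (N ^_ n)%:R.
Proof. by rewrite sumr_const -(card_injectiveb_ffun n N) mulr_natr. Qed.

Definition ffcomp n1 n2 n3 (s : {ffun 'I_n2 -> 'I_n3}) (t : {ffun 'I_n1 -> 'I_n2}) :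
  {ffun 'I_n1 -> 'I_n3} := [ffun i => s (t i)].

Lemma injectiveb_ffcomp n1 n2 n3 (s : {ffun 'I_n2 -> 'I_n3})
    (t : {ffun 'I_n1 -> 'I_n2}) :
  injectiveb s -> injectiveb t -> injectiveb (ffcomp s t).
Proof.
move=> /injectiveP inj_s /injectiveP inj_t; apply/injectiveP => i j.
by rewrite !ffunE => /inj_s /inj_t.
Qed.

(* Postcomposing with a permutation carrying [u'] to [u] maps the second fiber
   onto the first. *)
Lemma card_ffcomp_fiber n1 n2 n3 (t : {ffun 'I_n1 -> 'I_n2})
    (u u' : {ffun 'I_n1 -> 'I_n3}) : injectiveb u -> injectiveb u' ->
  #|[pred s : {ffun 'I_n2 -> 'I_n3} | injectiveb s && (ffcomp s t == u)]| =
  #|[pred s : {ffun 'I_n2 -> 'I_n3} | injectiveb s && (ffcomp s t == u')]|.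
Proof.
move=> /injectiveP inj_u /injectiveP inj_u'.
have [p pu'_u] := perm_extend_injective inj_u' inj_u.
pose pcomp (q : {perm 'I_n3}) (s : {ffun 'I_n2 -> 'I_n3}) : {ffun 'I_n2 -> 'I_n3} :=
  [ffun j => q (s j)].
have pcompK : cancel (pcomp p) (pcomp p^-1%g).
  by move=> s; apply/ffunP => j; rewrite !ffunE permK.
have pcompKV : cancel (pcomp p^-1%g) (pcomp p).
  by move=> s; apply/ffunP => j; rewrite !ffunE permKV.
rewrite -!sum1_card (reindex (pcomp p)) /=; last first.
  by apply: onW_bij; exists (pcomp p^-1%g).
apply: eq_bigl => s; rewrite !unfold_in /=.
have -> : injectiveb (pcomp p s) = injectiveb s.
  apply/injectiveP/injectiveP => inj_s i j.
    by move=> e; apply: inj_s; rewrite !ffunE e.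
  by rewrite !ffunE => /perm_inj /inj_s.
congr (_ && _); apply/eqP/eqP => e; apply/ffunP => i.
  have := congr1 (fun w : {ffun 'I_n1 -> 'I_n3} => w i) e.
  by rewrite /= !ffunE -pu'_u => /perm_inj.
by rewrite !ffunE -pu'_u -e ffunE.
Qed.

Lemma sum_injectiveb_ffcomp (R : numFieldType) n1 n2 n3
    (t : {ffun 'I_n1 -> 'I_n2}) (F : {ffun 'I_n1 -> 'I_n3} -> R) :
  (n1 <= n3)%N -> injectiveb t ->
  \sum_(s : {ffun 'I_n2 -> 'I_n3} | injectiveb s) F (ffcomp s t) =
  (n3 ^_ n2)%:R / (n3 ^_ n1)%:R *
  \sum_(u : {ffun 'I_n1 -> 'I_n3} | injectiveb u) F u.
Proof.
move=> le13 inj_t.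
pose u0 : {ffun 'I_n1 -> 'I_n3} := [ffun i => widen_ord le13 i].
have inj_u0 : injectiveb u0.
  by apply/injectiveP => i j; rewrite !ffunE => /(congr1 val) /= ij; apply: val_inj.
pose K := #|[pred s : {ffun 'I_n2 -> 'I_n3} | injectiveb s && (ffcomp s t == u0)]|.
have sumE (G : {ffun 'I_n1 -> 'I_n3} -> R) :
    \sum_(s : {ffun 'I_n2 -> 'I_n3} | injectiveb s) G (ffcomp s t) =
    K%:R * \sum_(u : {ffun 'I_n1 -> 'I_n3} | injectiveb u) G u.
  rewrite (partition_big (fun s => ffcomp s t) (fun u => injectiveb u)); last first.
    by move=> s inj_s; apply: injectiveb_ffcomp.
  rewrite mulr_sumr; apply: eq_bigr => u inj_u.
  rewrite (eq_bigr (fun _ => G u)) => [|s /andP[_ /eqP ->] //].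
  rewrite sumr_const mulr_natl; congr (_ *+ _).
  exact: card_ffcomp_fiber.
have := sumE (fun=> 1); rewrite !sum_injectiveb_cst !mul1r => ->.
have ffact_neq0 : (n3 ^_ n1)%:R != 0 :> R by rewrite pnatr_eq0 -lt0n ffact_gt0.
by rewrite sumE mulfK.
Qed.

Lemma subtuple_ffcomp (S : Type) n1 n2 n3 (s : {ffun 'I_n2 -> 'I_n3})
    (t : {ffun 'I_n1 -> 'I_n2}) (x : n3.-tuple S) :
  subtuple t (subtuple s x) = subtuple (ffcomp s t) x.
Proof. by apply: eq_from_tnth => i; rewrite !tnth_mktuple ffunE. Qed.

Lemma Ustat_comp (R : realType) (S : Type) n1 n2 n3 (h : n1.-tuple S -> R) :
  (n1 <= n2)%N -> (n2 <= n3)%N -> Ustat n3 h = Ustat n3 (Ustat n2 h).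
Proof.
move=> le12 le23; have le13 := leq_trans le12 le23.
apply: funext => x; rewrite /Ustat.
under [in RHS]eq_bigr => s _ do rewrite mulr_sumr.
rewrite [in RHS]exchange_big /=.
under [in RHS]eq_bigr => t inj_t.
  rewrite -mulr_sumr.
  under eq_bigr => s _ do rewrite subtuple_ffcomp.
  rewrite (sum_injectiveb_ffcomp (fun u => h (subtuple u x)) le13 inj_t).
  over.
rewrite /= sum_injectiveb_cst.
have ffact_neq0 a b : (a <= b)%N -> (b ^_ a)%:R != 0 :> R.
  by move=> le_ab; rewrite pnatr_eq0 -lt0n ffact_gt0.
move: (ffact_neq0 _ _ le12) (ffact_neq0 _ _ le23) (ffact_neq0 _ _ le13).
move: (n2 ^_ n1)%:R (n3 ^_ n2)%:R (n3 ^_ n1)%:R => a b c a0 b0 c0.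
by field; rewrite a0 b0 c0.
Qed.

Lemma supnorm_Ustat_le (R : realType) (S : Type) n N (g : n.-tuple S -> R) :
  (n <= N)%N -> (supnorm (Ustat N g) <= supnorm g)%E.
Proof.
move=> le_nN; rewrite /supnorm; apply: ge_ereal_sup => _ [x _ <-].
set M := ereal_sup _.
have normg_le y : ((`|g y|)%:E <= M)%E by apply: ereal_sup_ubound; exists y.
case M_eq : M => [r| |]; last 2 first.
- by rewrite leey.
- pose s0 : {ffun 'I_n -> 'I_N} := [ffun i => widen_ord le_nN i].
  by have := normg_le (subtuple s0 x); rewrite M_eq leeNy_eq.
have {}normg_le y : `|g y| <= r by rewrite -lee_fin -M_eq.
have ffact_pos : 0 < (N ^_ n)%:R :> R by rewrite ltr0n ffact_gt0.
rewrite lee_fin /Ustat normrM normfV normr_nat mulrC ler_pdivrMr //.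
apply: le_trans (ler_norm_sum _ _ _) _.
by rewrite -sum_injectiveb_cst; apply: ler_sum.
Qed.

Lemma bigsetIE (T : Type) (I : finType) (F : I -> set T) :
  \big[setI/setT]_(j : I) F j = [set y | forall j, F j y].
Proof.
apply/seteqP; split => y; first by move=> Fy j; move: Fy; rewrite (bigD1 j) // => -[].
by move=> Fy; apply: (big_ind (fun X : set T => X y)).
Qed.

Lemma bigsetU_sub (T : Type) (I : finType) (P : pred I) (F : I -> set T) (Z : set T) :
  (forall j, P j -> F j `<=` Z) -> \big[setU/set0]_(j | P j) F j `<=` Z.
Proof.
move=> FZ; apply: (big_ind (fun X : set T => X `<=` Z)) => // X Y XZ YZ y.
by case=> [/XZ|/YZ].
Qed.

Lemma sum_indic_trivIset_near (R : realType) (T : Type) (F : (set T)^nat) (y : T) :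
  trivIset setT F ->
  \forall m \near \oo, \sum_(k < m) (\1_(F k) y : R) = \1_(\bigcup_k F k) y.
Proof.
move=> triv_F; have [[k _ Fky]|notFy] := pselect ((\bigcup_k F k) y); last first.
  near=> m; rewrite big1 ?indicE ?memNset // => j _.
  by rewrite indicE memNset // => Fjy; apply: notFy; exists j.
near=> m; have km : (k < m)%N by near: m; exact: nbhs_infty_gt.
rewrite (bigD1 (Ordinal km)) //= big1 => [|j jk].
  by rewrite addr0 !indicE !mem_set //; exists k.
rewrite indicE memNset // => Fjy; move: jk; rewrite -(inj_eq val_inj) /=.
by rewrite (triv_F j k) ?eqxx //; exists y.
Unshelve. all: end_near.
Qed.

Section Measurability.
Context (R : realType) (d : measure_display) (S : measurableType d).

Lemma measurable_subtuple n N (s : 'I_n -> 'I_N) :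
  measurable_fun [set: N.-tuple S] (subtuple s).
Proof.
apply/measurable_fun_tnthP => i.
rewrite (_ : _ \o _ = (fun x : N.-tuple S => tnth x (s i))).
  exact: measurable_tnth.
by apply: funext => x; rewrite /= tnth_mktuple.
Qed.

Lemma measurable_Ustat n N (h : n.-tuple S -> R) : measurable_fun setT h ->
  measurable_fun [set: N.-tuple S] (Ustat N h).
Proof.
move=> mh; apply: measurable_realfun.measurable_funM => //.
rewrite (_ : (fun x => _) = fun x =>
    \sum_(s <- [seq s : {ffun 'I_n -> 'I_N} <- index_enum _ | injectiveb s])
      h (subtuple s x)); last by apply: funext => x; rewrite big_filter.
by apply: measurable_sum => s; exact: measurableT_comp mh (measurable_subtuple s).
Qed.

Definition Ustat_preimages n N : set (set (N.-tuple S)) :=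
  \bigcup_(h in [set h : n.-tuple S -> R | measurable_fun [set: n.-tuple S] h])
    preimage_set_system [set: N.-tuple S] (Ustat N h) measurable.
Arguments Ustat_preimages : clear implicits.

Definition Ustat_sigma n N := g_sigma_algebraType (Ustat_preimages n N).

Lemma Ustat_sigma_measurable n N (h : n.-tuple S -> R) : measurable_fun setT h ->
  measurable_fun (T := Ustat_sigma n N) setT (Ustat N h).
Proof.
by move=> mh _ Y mY; apply: sub_sigma_algebra; exists h => //; exists Y.
Qed.

Lemma Ustat_1E N (phi : S -> R) (x : N.-tuple S) :
  Ustat N (fun y : 1.-tuple S => phi (tnth y ord0)) x =
  N%:R^-1 * \sum_(i < N) phi (tnth x i).
Proof.
rewrite /Ustat ffactn1; congr (_ * _).
pose const_ffun (i : 'I_N) : {ffun 'I_1 -> 'I_N} := [ffun => i].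
have const_ffun_bij : bijective const_ffun.
  exists (fun s : {ffun 'I_1 -> 'I_N} => s ord0) => [i|s]; first by rewrite ffunE.
  by apply/ffunP => j; rewrite !ffunE [j]ord1.
rewrite (reindex const_ffun (onW_bij _ const_ffun_bij)) /=.
apply: eq_big => [i|i _]; last by rewrite tnth_mktuple ffunE.
by apply/injectiveP => j k _; rewrite [j]ord1 [k]ord1.
Qed.

Definition rect N (B : 'I_N -> set S) : set (N.-tuple S) :=
  [set x | forall i, B i (tnth x i)].

Definition rectangles N : set (set (N.-tuple S)) :=
  [set rect B | B in [set B : 'I_N -> set S | forall i, measurable (B i)]].
Arguments rectangles : clear implicits.

Lemma measurable_rect N (B : 'I_N -> set S) : (forall i, measurable (B i)) ->
  measurable (rect B).
Proof.
move=> mB; have -> : rect B =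
    \big[setI/setT]_(j : 'I_N) ((fun x : N.-tuple S => tnth x j) @^-1` B j).
  by rewrite bigsetIE.
apply: bigsetI_measurable => j _.
by have := measurable_tnth j measurableT (mB j); rewrite setTI.
Qed.

Lemma setI_closed_rectangles N : setI_closed (rectangles N).
Proof.
move=> _ _ [B mB <-] [C mC <-]; exists (fun i => B i `&` C i).
  by move=> i; apply: measurableI; [exact: mB|exact: mC].
by apply/seteqP; split => x /=; [move=> BCx; split => i; case: (BCx i)|case].
Qed.

Lemma measurable_rectangles N : @measurable _ (N.-tuple S) = <<s rectangles N >>.
Proof.
apply/seteqP; split; last first.
  apply: smallest_sub; first exact: sigma_algebra_measurable.
  by move=> _ [B mB <-]; exact: measurable_rect.
apply: smallest_sub; first exact: smallest_sigma_algebra.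
apply: bigsetU_sub => i _ _ [Y mY <-]; apply: sub_sigma_algebra.
exists (fun j => if j == i then Y else setT); first by move=> j; case: (j == i).
apply/seteqP; split => x /=; first by move=> Yx; split => //; have := Yx i; rewrite eqxx.
by move=> [_ Yx] j; case: eqP => [->|].
Qed.

Definition perm_count N (A : set (N.-tuple S)) (x : N.-tuple S) : R :=
  \sum_(p : {perm 'I_N}) \1_A (subtuple p x).

Lemma perm_count_invariant N (A : set (N.-tuple S)) :
  (forall (p : {perm 'I_N}) x, A (subtuple p x) = A x) ->
  perm_count A = fun x => N`!%:R * \1_A x.
Proof.
move=> A_inv; apply: funext => x; rewrite /perm_count.
rewrite (eq_bigr (fun _ => \1_A x)) => [|p _].
  by rewrite sumr_const card_Sn mulr_natl.
by rewrite !indicE; congr ((nat_of_bool _)%:R); apply/idP/idP; rewrite !in_setE A_inv.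
Qed.

Lemma perm_count_bigcup_near N (F : (set (N.-tuple S))^nat) (x : N.-tuple S) :
  trivIset setT F ->
  \forall m \near \oo, \sum_(k < m) perm_count (F k) x = perm_count (\bigcup_k F k) x.
Proof.
move=> triv_F.
have near_p (p : {perm 'I_N}) := sum_indic_trivIset_near R (subtuple p x) triv_F.
apply: filterS (filter_forall _ near_p) => m Fm; rewrite /perm_count exchange_big /=.
by apply: eq_bigr => p _; exact: Fm.
Qed.

Section SymmetricSets.
Variables n N : nat.
Hypotheses (n_gt0 : (0 < n)%N) (le_nN : (n <= N)%N).

Local Notation Umeasurable F := (measurable_fun (T := Ustat_sigma n N) setT F).

Lemma Umeasurable_sum_coord (phi : S -> R) : measurable_fun setT phi ->
  Umeasurable (fun x : N.-tuple S => \sum_(i < N) phi (tnth x i)).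
Proof.
move=> mphi; pose h1 (y : 1.-tuple S) := phi (tnth y ord0).
have N_gt0 : (0 < N)%N := leq_trans n_gt0 le_nN.
have -> : (fun x : N.-tuple S => \sum_(i < N) phi (tnth x i)) =
          (fun x => N%:R * Ustat N h1 x).
  by apply: funext => x; rewrite Ustat_1E mulVKf // pnatr_eq0 -lt0n.
apply: measurable_realfun.measurable_funM => //.
rewrite (Ustat_comp h1 n_gt0 le_nN); apply: Ustat_sigma_measurable.
by apply: measurable_Ustat; exact: measurableT_comp mphi (measurable_tnth ord0).
Qed.

(* The counts of coordinates in each fiber of [v] determine [map_tuple v x]
   up to order. *)
Lemma Umeasurable_perm_invariant (T : finType) (v : S -> T) (G : N.-tuple T -> R) :
  (forall w, measurable (v @^-1` [set w])) ->
  (forall t t' : N.-tuple T, perm_eq t t' -> G t = G t') ->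
  Umeasurable (fun x => G (map_tuple v x)).
Proof.
move=> mv G_perm.
pose count_in w (x : N.-tuple S) : R := \sum_(i < N) \1_(v @^-1` [set w]) (tnth x i).
have count_inE w x : count_in w x = (count_mem w (map_tuple v x))%:R.
  rewrite /= count_map -sum1_count big_tuple natr_sum big_mkcond /=.
  apply: eq_bigr => i _; rewrite indicE.
  case: ifPn => [/eqP vx|/eqP vx]; first by rewrite mem_set.
  by rewrite memNset.
have m_count_in w k : @measurable _ (Ustat_sigma n N) [set x | count_in w x = k].
  have := Umeasurable_sum_coord (@measurable_realfun.measurable_indic _ _ R setT _ (mv w))
    measurableT (measurable_set1 k).
  by rewrite setTI.
move=> _ Y mY; rewrite setTI.
have -> : (fun x => G (map_tuple v x)) @^-1` Y =
    \big[setU/set0]_(t | `[< Y (G t) >])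
      \big[setI/setT]_w [set x | count_in w x = (count_mem w t)%:R].
  apply/seteqP; split => [x /= Yx|].
    rewrite (bigD1 (map_tuple v x)) /=; last exact/asboolP.
    by left; rewrite bigsetIE => w /=; exact: count_inE.
  apply: bigsetU_sub => t /asboolP Yt x; rewrite bigsetIE /= => count_x.
  rewrite (G_perm _ t) //; apply/allP => w _ /=.
  by rewrite -(eqr_nat R) -count_inE; apply/eqP; exact: count_x.
by apply: bigsetU_measurable => t _; apply: bigsetI_measurable => w _.
Qed.

Lemma Umeasurable_perm_count_rect (B : 'I_N -> set S) : (forall i, measurable (B i)) ->
  Umeasurable (perm_count (rect B)).
Proof.
move=> mB; pose v (y : S) : {ffun 'I_N -> bool} := [ffun j => `[< B j y >]].
pose G (t : N.-tuple {ffun 'I_N -> bool}) : R :=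
  \sum_(p : {perm 'I_N}) ([forall j, tnth t (p j) j] : nat)%:R.
have -> : perm_count (rect B) = fun x => G (map_tuple v x).
  apply: funext => x; apply: eq_bigr => p _; rewrite indicE; congr ((nat_of_bool _)%:R).
  apply/idP/forallP => [/set_mem rect_x j|vx].
    by rewrite tnth_map ffunE; apply/asboolP; have := rect_x j; rewrite tnth_mktuple.
  by apply: mem_set => j; have := vx j; rewrite tnth_map ffunE tnth_mktuple => /asboolP.
apply: Umeasurable_perm_invariant => [w|t t'].
  rewrite (_ : v @^-1` [set w] = \big[setI/setT]_j (if w j then B j else ~` B j)).
    by apply: bigsetI_measurable => j _; case: (w j) => //; apply: measurableC.
  rewrite bigsetIE; apply/seteqP; split => y /=.
    by move=> <- j; rewrite ffunE; case: asboolP.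
  move=> wy; apply/ffunP => j; rewrite ffunE; have := wy j.
  by case: (w j) => By; [exact: asboolT|exact: asboolF].
case/tuple_permP => q t_q.
have tE k : tnth t k = tnth t' (q k).
  have -> : t = [tuple tnth t' (q i) | i < N] by apply: val_inj; rewrite /= t_q.
  by rewrite tnth_mktuple.
rewrite /G [in RHS](reindex_inj (mulIg q)) /=; apply: eq_bigr => p _.
by congr ((nat_of_bool _)%:R); apply: eq_forallb => j; rewrite tE permM.
Qed.

Lemma Umeasurable_perm_count (A : set (N.-tuple S)) : measurable A ->
  Umeasurable (perm_count A).
Proof.
move=> mA; apply: (dynkin_induction (P := fun X => Umeasurable (perm_count X))
  (measurable_rectangles N)); last by rewrite -measurable_rectangles.
- exact: setI_closed_rectangles.
- have := Umeasurable_perm_count_rect (B := fun=> setT) (fun=> measurableT).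
  by rewrite (_ : rect _ = setT) //; apply/seteqP; split.
- by move=> _ [B mB <-]; exact: Umeasurable_perm_count_rect.
- move=> X _ mX; rewrite (_ : perm_count _ = cst N`!%:R \- perm_count X).
    exact: measurable_realfun.measurable_funB.
  apply: funext => x /=; apply/eqP; rewrite eq_sym subr_eq -big_split /=.
  rewrite (eq_bigr (fun=> 1)); last first.
    move=> p _; rewrite indicC indicE.
    by case: (subtuple p x \in X); rewrite ?add0r ?addr0.
  by rewrite sumr_const card_Sn.
move=> F _ triv_F mF.
apply: (@measurable_realfun.measurable_fun_cvg _ (Ustat_sigma n N) R setT
  (fun m x => \sum_(k < m) perm_count (F k) x)).
  by move=> m; apply: measurable_sum => k; exact: mF.
by move=> x _; exact: cvg_near_cst (perm_count_bigcup_near x triv_F).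
Qed.

Lemma Ustat_sigma_measurable_invariant (A : set (N.-tuple S)) : measurable A ->
  (forall (p : {perm 'I_N}) x, A (subtuple p x) = A x) ->
  @measurable _ (Ustat_sigma n N) A.
Proof.
move=> mA A_inv; apply/(@measurable_realfun.measurable_indicP _ (Ustat_sigma n N) R).
have fact_neq0 : N`!%:R != 0 :> R by rewrite pnatr_eq0 -lt0n fact_gt0.
rewrite (_ : \1_A = fun x => N`!%:R^-1 * perm_count A x).
  exact: measurable_realfun.measurable_funM (Umeasurable_perm_count mA).
by apply: funext => x; rewrite perm_count_invariant // mulKf.
Qed.

End SymmetricSets.
End Measurability.

Theorem lemma3 (R : realType) (d : measure_display) (S : measurableType d)
  (n N : nat) (g : n.-tuple S -> R) (f : N.-tuple S -> R) :
  (n <= N)%N ->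
  symmetric_fun f ->
  measurable_fun [set: N.-tuple S] f ->
  [/\ (* (i) *)
      (supnorm (Ustat N g) <= supnorm g)%E,
      (* (ii) *)
      (forall (n1 n2 n3 : nat) (h : n1.-tuple S -> R),
          (n1 <= n2)%N -> (n2 <= n3)%N ->
          Ustat n3 h = Ustat n3 (Ustat n2 h)),
      (* (iii) *)
      (forall N1 N2 : nat, (n <= N1)%N -> (N1 <= N2)%N ->
          (supnorm (Ustat N2 g) <= supnorm (Ustat N1 g))%E)
    & (* (iv) *)
      ((0 < n)%N ->
       forall B : set R, measurable B ->
         sigma_U R S n N (f @^-1` B))].
Proof.
move=> le_nN sym_f mf; split.
- exact: supnorm_Ustat_le.
- by move=> n1 n2 n3 h; exact: Ustat_comp.
- by move=> N1 N2 le_nN1 le_N12; rewrite (Ustat_comp g le_nN1 le_N12) supnorm_Ustat_le.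
move=> n_gt0 B mB; apply: Ustat_sigma_measurable_invariant => //.
  by rewrite -[_ @^-1` _]setTI; exact: mf.
by move=> p x; rewrite /preimage /= sym_f.
Qed.
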